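(* Consider Algorithm AUX with parameter $t_0$ on an instance satisfying the standing assumption, with an edge labeling as in the context. For every offline vertex $u$ and every $t\in[0,1]$, we have $f_u(t)\le f(t)$.
   Context: **Model.** Poisson arrival model. Each online type $i$ independently arrives according to a Poisson process of rate $\lambda_i$ on $[0,1]$. On arrival, a vertex is immediately and irrevocably matched to an unmatched offline neighbor or discarded. Each offline vertex is matched at most once. The instance is a bipartite graph $(I,J,E)$ with rates $\lambda_i>0$. **Standing assumption.** There are values $x_{ij}\ge0$ (an optimal Jaillet–Lu LP solution) with $\sum_i x_{ij}=1$ for all $j$, and each type is one of two kinds: - first-class: one neighbor $j$, with $x_{ij}=\lambda_i$; - second-class: two neighbors $j_1,j_2$, with $x_{ij_1}=x_{ij_2}=\lambda_i/2$. **Labeling.** Each edge is labeled first-class or second-class. Edges of first-class types are labeled first-class. For every $j$, the first-class-labeled edges at $j$ have total $x$-value $1-\ln2$. **Reference process.** $H$ has offline vertices $a,b$; a type of rate $2\ln2$ adjacent to both; and types of rate $1-\ln2$ adjacent only to $a$, resp. only to $b$. Algorithm RES with parameter $t_0$ works as follows: - single-neighbor arrivals are matched if their neighbor is unmatched; - a two-neighbor arrival at time $t>t_0$ with an unmatched neighbor is matched to a uniformly random unmatched neighbor. On $H$ under RES, $f(t)$ is the probability that a given offline vertex is matched by time $t$, $g(t)$ the probability both are, and $\bar g=1-g$. **Algorithm AUX (parameter $t_0$).** Under AUX: - $f_u(t)$ is the probability that offline $u$ is matched by time $t$, and $\bar f_u=1-f_u$; - $g'_{u,v}(t)$ is the probability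 that both $u$ and $v$ are unmatched at time $t$. Edges are used only if their offline endpoint is unmatched. - A first-class arrival is matched to its neighbor if possible. - A second-class arrival of type $i$ with neighbors $u,v$ chooses at most one edge, with disjoint probabilities: - each first-class-labeled edge $(i,u)$ with probability $1/2$; - if the arrival time is $t>t_0$, each second-class-labeled edge $(i,u)$ with probability $\frac12\min\{\bar g(t)/(2\bar f_u(t)-g'_{u,v}(t)),1\}$ if $v$ is unmatched, or $\min\{\bar g(t)/(2\bar f_u(t)-g'_{u,v}(t)),1\}$ if $v$ is matched. *)

From HB Require Import structures.
From mathcomp Require Import all_boot all_order all_algebra.
From mathcomp Require Import all_classical all_reals all_analysis.
Set Implicit Arguments. Unset Strict Implicit. Unset Printing Implicit Defensive.
Import Order.TTheory GRing.Theory Num.Theory.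
Import numFieldNormedType.Exports.

Local Open Scope ring_scope.

Section Defs.
Variable R : realType.

(* ---------- Continuous-time chains on "set of matched offline vertices" ----------
   A state is the set S of offline vertices already matched.  A rate function
   r t S j (for j \notin S) is the rate at which, at time t in state S, vertex j
   becomes matched (the only possible transitions are S -> S :|: [set j]).
   p t S is the probability of being in state S at time t.  The law of the
   process is characterized by the Kolmogorov forward equation. *)

Definition fwd_rhs (J : finType) (r : {set J} -> J -> R) (q : {set J} -> R)
    (S : {set J}) : R :=
  \sum_(j in S) q (S :\ j) * r (S :\ j) j - q S * \sum_(j in ~: S) r S j.

(* p is the law on [0,1] of the chain with rates r started with nothing matched;
   rates may jump at time t0, where no derivative is required. *)
Definition is_law (J : finType) (r : R -> {set J} -> J -> R)
    (p : R -> {set J} -> R) (t0 : R) : Prop :=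
  (forall S, p 0 S = (S == finset.set0)%:R) /\
  (forall S, {within `[0, 1], continuous (fun s => p s S)}%classic) /\
  (forall S t, 0 < t < 1 -> t != t0 ->
      is_derive t 1 (fun s => p s S) (fwd_rhs (r t) (p t) S)).

(* ---------- Reference process H under RES ----------
   Offline vertices a = true, b = false.  Rates: the single-neighbor type of
   rate 1 - ln 2 at each vertex; the two-neighbor type of rate 2 ln 2, active
   for t > t0, matched uniformly among unmatched neighbors. *)
Definition res_rate (t0 : R) (t : R) (S : {set bool}) (j : bool) : R :=
  (1 - ln 2) +
  (if t0 < t then 2 * ln 2 * (if (~~ j) \in S then 1 else 1 / 2) else 0).

Definition fH (h : R -> {set bool} -> R) (t : R) : R :=
  \sum_(S : {set bool} | true \in S) h t S.
Definition gH (h : R -> {set bool} -> R) (t : R) : R := h t (finset.setT : {set bool}).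
Definition gbarH (h : R -> {set bool} -> R) (t : R) : R := 1 - gH h t.

Definition nbrs (I J : finType) (E : I -> J -> bool) (i : I) : {set J} :=
  [set j | E i j].

Definition first_class (I J : finType) (lam : I -> R) (E : I -> J -> bool)
    (x : I -> J -> R) (i : I) : Prop :=
  exists j, nbrs E i = [set j] /\ x i j = lam i.

Definition second_class (I J : finType) (lam : I -> R) (E : I -> J -> bool)
    (x : I -> J -> R) (i : I) : Prop :=
  exists j1 j2, j1 != j2 /\ nbrs E i = [set j1; j2] /\
    x i j1 = lam i / 2 /\ x i j2 = lam i / 2.

Definition standing_assumption (I J : finType) (lam : I -> R)
    (E : I -> J -> bool) (x : I -> J -> R) : Prop :=
  (forall i, 0 < lam i) /\
  (forall i j, 0 <= x i j) /\
  (forall i j, ~~ E i j -> x i j = 0) /\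
  (forall j, \sum_(i : I) x i j = 1) /\
  (forall i, first_class lam E x i \/ second_class lam E x i).

(* Edge labeling: lab i j = true means (i,j) is labeled first-class. *)
Definition labeling_ok (I J : finType) (lam : I -> R) (E : I -> J -> bool)
    (x : I -> J -> R) (lab : I -> J -> bool) : Prop :=
  (forall i j, first_class lam E x i -> E i j -> lab i j) /\
  (forall j, \sum_(i | E i j && lab i j) x i j = 1 - ln 2).

Definition fAux (J : finType) (p : R -> {set J} -> R) (u : J) (t : R) : R :=
  \sum_(S : {set J} | u \in S) p t S.
Definition fbarAux (J : finType) (p : R -> {set J} -> R) (u : J) (t : R) : R :=
  1 - fAux p u t.
Definition gpAux (J : finType) (p : R -> {set J} -> R) (u v : J) (t : R) : R :=
  \sum_(S : {set J} | (u \notin S) && (v \notin S)) p t S.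

Definition aux_m (J : finType) (h : R -> {set bool} -> R) (p : R -> {set J} -> R)
    (u v : J) (t : R) : R :=
  Order.min (gbarH h t / (2 * fbarAux p u t - gpAux p u v t)) 1.

(* probability that an arrival of type i at time t in state S (u \notin S)
   is matched to u *)
Definition aux_prob (I J : finType) (E : I -> J -> bool) (lab : I -> J -> bool)
    (t0 : R) (h : R -> {set bool} -> R) (p : R -> {set J} -> R)
    (t : R) (S : {set J}) (i : I) (u : J) : R :=
  if ~~ E i u then 0
  else if #|nbrs E i| == 1%N then 1
  else if lab i u then 1 / 2
  else if t0 < t then
    \sum_(v | E i v && (v != u))
       (if v \in S then aux_m h p u v t else 1 / 2 * aux_m h p u v t)
  else 0.

Definition aux_rate (I J : finType) (lam : I -> R) (E : I -> J -> bool)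
    (lab : I -> J -> bool) (t0 : R) (h : R -> {set bool} -> R)
    (p : R -> {set J} -> R) (t : R) (S : {set J}) (u : J) : R :=
  \sum_(i : I) lam i * aux_prob E lab t0 h p t S i u.

End Defs.

From HB Require Import structures.
From mathcomp Require Import all_boot all_order all_algebra.
From mathcomp Require Import all_classical all_reals all_analysis.
From mathcomp Require Import lra ring.
Import Order.TTheory GRing.Theory Num.Theory.
Import numFieldNormedType.Exports.
Set Implicit Arguments.
Unset Strict Implicit.
Unset Printing Implicit Defensive.
Local Open Scope ring_scope.

(* Let y = f - f_u.  In the symmetric reference process H the forward equation
   gives f' = (1 - ln 2)(1 - f) + [t > t0] ln 2 * gbar.  In AUX, the flow into u
   through first-class-labeled edges is (1 - ln 2)(1 - f_u), since these edges
   carry x-mass 1 - ln 2 at u; the flow through second-class-labeled edges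
   (x-mass ln 2) is capped at ln 2 * gbar by the min-factor.  Hence
   y' + (1 - ln 2) y >= 0 away from t0, y(0) = 0, and the integrating factor
   e^((1 - ln 2) t) shows y >= 0 on [0, 1]. *)

Section real_calculus.
Variable R : realType.

Lemma lt01_le01 (s : R) : 0 < s < 1 -> 0 <= s <= 1.
Proof. by case/andP => s0 s1; rewrite !ltW. Qed.

Lemma is_derive_sum_seq (x : R) (I : Type) (r : seq I) (P : pred I)
    (F : I -> R -> R) (dF : I -> R) :
  (forall i, P i -> is_derive x 1 (F i) (dF i)) ->
  is_derive x 1 (fun s => \sum_(i <- r | P i) F i s) (\sum_(i <- r | P i) dF i).
Proof.
move=> FdF; rewrite -fct_sumE; elim/big_ind2: _ => //.
- exact: is_derive_cst.
- by move=> f df g dg; exact: is_deriveD.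
Qed.

Lemma continuous_within_sum (A : set R) (I : Type) (r : seq I) (P : pred I)
    (F : I -> R -> R) :
  (forall i, {within A, continuous (F i)}%classic) ->
  {within A, continuous (fun s => \sum_(i <- r | P i) F i s)}%classic.
Proof.
move=> FA; rewrite -fct_sumE; elim/big_ind: _ => //.
- by move=> z; exact: cvg_cst.
- by move=> f g fA gA z; apply: continuousD; [exact: fA | exact: gA].
Qed.

Lemma is_derive_expR_scale (c x : R) :
  is_derive x 1 (fun s => expR (c * s)) (c * expR (c * x)).
Proof.
rewrite mulrC; apply: is_derive1_comp.
by rewrite -[c in is_derive _ _ _ c]mulr1; apply: is_deriveZ.
Qed.

(* [y e^(c s)] has derivative [e^(c s) (y' + c y) >= 0]: it is nondecreasing. *)
Lemma ode_ineq_ge0 (a b c : R) (y dy : R -> R) : a <= b ->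
  {within `[a, b], continuous y}%classic ->
  (forall s, a < s < b -> is_derive s 1 y (dy s) /\ 0 <= dy s + c * y s) ->
  0 <= y a -> 0 <= y b.
Proof.
rewrite le_eqVlt => /orP[/eqP <- //|ab] y_cont y_ode ya.
pose e s := expR (c * s).
pose phi s := y s * e s.
have phi_derive s : s \in `]a, b[ -> is_derive s 1 phi (e s * (dy s + c * y s)).
  rewrite in_itv /= => /y_ode[y_der _].
  have := is_deriveM y_der (is_derive_expR_scale c s).
  by move/is_derive_eq; apply; rewrite /GRing.scale /e /=; ring.
have phi_cont : {within `[a, b], continuous phi}%classic.
  move=> z; apply: continuousM; first exact: y_cont.
  apply/continuous_subspaceT => {}z.
  apply/differentiable_continuous/derivable1_diffP.
  by have [] := is_derive_expR_scale c z.
have [s s_ab phi_incr] := MVT ab phi_derive phi_cont.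
have : phi a <= phi b.
  rewrite -subr_ge0 phi_incr; apply: mulr_ge0; last by rewrite subr_ge0 ltW.
  apply: mulr_ge0; first exact/ltW/expR_gt0.
  by move: s_ab; rewrite in_itv /= => /y_ode[].
rewrite /phi => le_phi.
have : 0 <= y b * e b.
  by apply: le_trans le_phi; rewrite mulr_ge0 // ltW ?expR_gt0.
by rewrite pmulr_lge0 // expR_gt0.
Qed.

Lemma ode_ineq_ge0_piecewise (t0 c1 c2 : R) (y dy : R -> R) : 0 <= t0 ->
  {within `[0, 1], continuous y}%classic -> 0 <= y 0 ->
  (forall s, 0 < s < 1 -> s != t0 ->
     is_derive s 1 y (dy s) /\ 0 <= dy s + (if t0 < s then c2 else c1) * y s) ->
  forall t, 0 <= t <= 1 -> 0 <= y t.
Proof.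
move=> t0_ge0 y_cont y0 y_ode.
have on_piece a b c : 0 <= a <= b -> b <= 1 ->
    (forall s, a < s < b -> s != t0 /\ (if t0 < s then c2 else c1) = c) ->
    0 <= y a -> 0 <= y b.
  move=> /andP[a0 ab] b1 piece; apply: (ode_ineq_ge0 (c := c) (dy := dy) ab).
    apply: continuous_subspaceW y_cont => z /=.
    rewrite !in_itv /= => /andP[az zb].
    by rewrite (le_trans a0 az) (le_trans zb b1).
  move=> s /[dup] sab /andP[a_s sb]; have [s_t0 <-] := piece s sab.
  by apply: y_ode s_t0; rewrite (le_lt_trans a0 a_s) (lt_le_trans sb b1).
move=> t /andP[t_ge0 t_le1].
have [t_le_t0 | t0_lt_t] := leP t t0.
  apply: (on_piece 0 t c1) => //; first by rewrite lexx.
  move=> s /andP[_ st]; have s_t0 := lt_le_trans st t_le_t0.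
  by rewrite lt_eqF // ltNge (ltW s_t0).
apply: (on_piece t0 t c2); rewrite ?t0_ge0 ?(ltW t0_lt_t) //.
  by move=> s /andP[t0s _]; rewrite gt_eqF // t0s.
apply: (on_piece 0 t0 c1); rewrite ?lexx ?(le_trans (ltW t0_lt_t) t_le1) //.
by move=> s /andP[_ st0]; rewrite lt_eqF // ltNge (ltW st0).
Qed.

Lemma ode_eq0_piecewise (t0 c1 c2 : R) (y dy : R -> R) : 0 <= t0 ->
  {within `[0, 1], continuous y}%classic -> y 0 = 0 ->
  (forall s, 0 < s < 1 -> s != t0 ->
     is_derive s 1 y (dy s) /\ dy s = - ((if t0 < s then c2 else c1) * y s)) ->
  forall t, 0 <= t <= 1 -> y t = 0.
Proof.
move=> t0_ge0 y_cont y0 y_ode t t01.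
apply/eqP; rewrite eq_le; apply/andP; split.
  rewrite -oppr_ge0.
  apply: (ode_ineq_ge0_piecewise (c1 := c1) (c2 := c2) (y := fun s => - y s)
    (dy := fun s => - dy s) t0_ge0) => //.
  - by move=> z; apply: continuousN; exact: y_cont.
  - by rewrite y0 oppr0.
  move=> s s01 s_t0; have [y_der dyE] := y_ode s s01 s_t0.
  split; last by rewrite dyE opprK mulrN subrr.
  exact: is_deriveN.
apply: (ode_ineq_ge0_piecewise (c1 := c1) (c2 := c2) (dy := dy) t0_ge0 y_cont)
  => //; first by rewrite y0.
move=> s s01 s_t0; have [y_der dyE] := y_ode s s01 s_t0.
by split => //; rewrite dyE addNr.
Qed.
End real_calculus.

Section forward_equation.
Variables (R : realType) (J : finType).
Implicit Types (r : {set J} -> J -> R) (q w : {set J} -> R).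

Lemma sum_mem_setU1 (j : J) (G : {set J} -> R) :
  \sum_(S : {set J} | j \in S) G S = \sum_(T : {set J} | j \notin T) G (j |: T).
Proof.
rewrite (reindex_onto (fun T => j |: T) (fun S => S :\ j)) => [|S jS]; last first.
  by rewrite finset.setD1K.
apply: eq_bigl => T; rewrite finset.setU11 /=.
by apply/eqP/idP => [<-|jT]; [rewrite finset.setD11 | rewrite finset.setU1K].
Qed.

(* Adjoint form of the forward equation: [d/dt E w(S_t) = E (L w)(S_t)], with
   [L] the generator of the chain. *)
Lemma sum_fwd_rhs_weighted r q w :
  \sum_S w S * fwd_rhs r q S =
  \sum_S q S * \sum_(j in ~: S) r S j * (w (j |: S) - w S).
Proof.
have split_out S : q S * \sum_(j in ~: S) r S j * (w (j |: S) - w S) =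
    q S * \sum_(j in ~: S) r S j * w (j |: S)
    - w S * (q S * \sum_(j in ~: S) r S j).
  by under eq_bigr do rewrite mulrBr; rewrite sumrB -mulr_suml; ring.
rewrite (eq_bigr _ (fun S _ => split_out S)) /fwd_rhs.
under [LHS]eq_bigr do rewrite mulrBr.
rewrite !sumrB; congr (_ - _).
under eq_bigr do rewrite mulr_sumr.
rewrite (exchange_big_dep predT) //=.
under eq_bigr => j _ do rewrite sum_mem_setU1.
under [RHS]eq_bigr do rewrite mulr_sumr.
rewrite [RHS](exchange_big_dep predT) //=.
apply: eq_bigr => j _; apply: eq_big => [T | T jT]; first by rewrite inE.
by rewrite finset.setU1K //; ring.
Qed.

Lemma sum_fwd_rhs r q : \sum_S fwd_rhs r q S = 0.
Proof.
have := sum_fwd_rhs_weighted r q (fun _ => 1).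
under eq_bigr do rewrite mul1r.
move=> ->; apply: big1 => S _.
by rewrite big1 ?mulr0 // => j _; rewrite subrr mulr0.
Qed.

Lemma sum_mem_fwd_rhs r q (u : J) :
  \sum_(S : {set J} | u \in S) fwd_rhs r q S =
  \sum_(S : {set J} | u \notin S) q S * r S u.
Proof.
have := sum_fwd_rhs_weighted r q (fun S => (u \in S)%:R).
under eq_bigr do rewrite mulr_natl mulrb.
rewrite -big_mkcond /= => ->.
rewrite [RHS]big_mkcond /=; apply: eq_bigr => S _.
have [uS | uS] := boolP (u \in S).
  by rewrite big1 ?mulr0 // => j _; rewrite in_setU1 uS orbT subrr mulr0.
have uC : u \in ~: S by rewrite finset.in_setC uS.
rewrite (bigD1 u uC) /= finset.setU11 subr0 mulr1 big1 ?addr0 //.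
move=> j /andP[_ ju].
by rewrite in_setU1 (negPf uS) eq_sym (negPf ju) subrr mulr0.
Qed.

End forward_equation.

Section law.
Variables (R : realType) (J : finType) (r : R -> {set J} -> J -> R).
Variables (p : R -> {set J} -> R) (t0 : R).
Hypotheses (t0_ge0 : 0 <= t0) (law : is_law r p t0).

Lemma law_fAux0 (u : J) : fAux p u 0 = 0.
Proof.
have [init _] := law; apply: big1 => S uS; rewrite init.
by case: eqP uS => // ->; rewrite inE.
Qed.

Lemma law_fAux_continuous (u : J) :
  {within `[0, 1], continuous (fAux p u)}%classic.
Proof. by have [_ [cont _]] := law; exact: continuous_within_sum. Qed.

Lemma law_fAux_derive (u : J) (s : R) : 0 < s < 1 -> s != t0 ->
  is_derive s 1 (fAux p u) (\sum_(S : {set J} | u \notin S) p s S * r s S u).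
Proof.
have [_ [_ der]] := law; move=> s01 s_t0.
by rewrite -sum_mem_fwd_rhs; apply: is_derive_sum_seq => S _; exact: der.
Qed.

Lemma law_sum1 (t : R) : 0 <= t <= 1 -> \sum_S p t S = 1.
Proof.
have [init [cont der]] := law.
move=> t01; apply/eqP; rewrite -subr_eq0; apply/eqP; move: t t01.
apply: (ode_eq0_piecewise (c1 := 0) (c2 := 0) (dy := fun=> 0) t0_ge0) => //.
- move=> z; apply: continuousB; last exact: cvg_cst.
  exact: continuous_within_sum.
- rewrite (bigD1 finset.set0) //= init eqxx big1 ?addr0 ?subrr //.
  by move=> S /negPf S0; rewrite init S0.
move=> s s01 s_t0; split; last by rewrite if_same mul0r oppr0.
apply: (is_derive_eq (f' := \sum_S fwd_rhs (r s) (p s) S - 0)).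
  apply: (is_deriveB (f := fun t => \sum_S p t S) (g := fun=> 1)).
    by apply: is_derive_sum_seq => S _; exact: der.
by rewrite sum_fwd_rhs subr0.
Qed.

Lemma law_sum_notin (u : J) (t : R) : 0 <= t <= 1 ->
  \sum_(S : {set J} | u \notin S) p t S = fbarAux p u t.
Proof.
move=> t01; rewrite /fbarAux /fAux -(law_sum1 t01).
by rewrite [in RHS](bigID (fun S : {set J} => u \in S)) /= addrAC subrr add0r.
Qed.

End law.

Section reference_process.
Variable R : realType.

Lemma ln2_gt0 : 0 < ln (2 : R).
Proof. by apply: ln_gt0; rewrite ltr1n. Qed.

Lemma ln2_le1 : ln (2 : R) <= 1.
Proof. by rewrite -ler_expR lnK ?posrE // (le_trans _ (expR_ge1Dx 1)). Qed.

Lemma setC1_bool (b : bool) : ~: [set b] = [set ~~ b].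
Proof. by apply/setP => c; rewrite !inE; case: b; case: c. Qed.

Lemma sum_setbool (F : {set bool} -> R) :
  \sum_(S : {set bool}) F S =
  F finset.set0 + F [set true] + F [set false] + F [set: bool].
Proof.
pose mk (bc : bool * bool) : {set bool} := [set c | if c then bc.1 else bc.2].
rewrite (reindex mk) /=; last first.
  exists (fun S : {set bool} => (true \in S, false \in S)) => [[b c] _ | S _].
    by rewrite !inE.
  by apply/setP => -[]; rewrite !inE.
rewrite -(pair_big xpredT xpredT (fun b c => F (mk (b, c)))) /= !big_bool /=.
have -> : mk (true, true) = [set: bool] by apply/setP => -[]; rewrite !inE.
have -> : mk (true, false) = [set true] by apply/setP => -[]; rewrite !inE.
have -> : mk (false, true) = [set false] by apply/setP => -[]; rewrite !inE.
have -> : mk (false, false) = finset.set0 by apply/setP => -[]; rewrite !inE.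
ring.
Qed.

Lemma fwd_rhs_set0_bool (r : {set bool} -> bool -> R) q :
  fwd_rhs r q finset.set0 =
  - (q finset.set0 * (r finset.set0 true + r finset.set0 false)).
Proof.
rewrite /fwd_rhs big_set0 finset.setC0 sub0r.
by rewrite (eq_bigl xpredT) ?big_bool // => c; rewrite inE.
Qed.

Lemma fwd_rhs_set1_bool (r : {set bool} -> bool -> R) q (b : bool) :
  fwd_rhs r q [set b] =
  q finset.set0 * r finset.set0 b - q [set b] * r [set b] (~~ b).
Proof. by rewrite /fwd_rhs big_set1 setC1_bool big_set1 finset.setDv. Qed.

Lemma res_rate_set0 (t0 t : R) (b : bool) :
  res_rate t0 t finset.set0 b = 1 - ln 2 + (if t0 < t then ln 2 else 0).
Proof. by rewrite /res_rate inE; case: ifP => // _; field. Qed.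

Lemma res_rate_set1 (t0 t : R) (b : bool) :
  res_rate t0 t [set b] (~~ b) = 1 - ln 2 + (if t0 < t then 2 * ln 2 else 0).
Proof. by rewrite /res_rate negbK inE eqxx mulr1. Qed.

End reference_process.

Section reference_law.
Variables (R : realType) (t0 : R) (h : R -> {set bool} -> R).
Hypotheses (t0_ge0 : 0 <= t0) (lawH : is_law (res_rate t0) h t0).

Lemma res_law_set0_ge0 (t : R) : 0 <= t <= 1 -> 0 <= h t finset.set0.
Proof.
have [init [cont der]] := lawH.
apply: (ode_ineq_ge0_piecewise (c1 := 2 * (1 - ln 2)) (c2 := 2)
  (dy := fun s => fwd_rhs (res_rate t0 s) (h s) finset.set0) t0_ge0 (cont _)).
  by rewrite init eqxx.
move=> s s01 s_t0; split; first exact: der.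
by rewrite fwd_rhs_set0_bool !res_rate_set0; case: ifP => _; lra.
Qed.

Lemma res_law_set1_ge0 (b : bool) (t : R) : 0 <= t <= 1 -> 0 <= h t [set b].
Proof.
have [init [cont der]] := lawH.
have ln2_ge0 := ltW (@ln2_gt0 R).
apply: (ode_ineq_ge0_piecewise (c1 := 1 - ln 2) (c2 := 1 + ln 2)
  (dy := fun s => fwd_rhs (res_rate t0 s) (h s) [set b]) t0_ge0 (cont _)).
  by rewrite init; case: eqP => // /setP /(_ b); rewrite !inE.
move=> s s01 s_t0; split; first exact: der.
have := res_law_set0_ge0 (lt01_le01 s01); have := @ln2_le1 R.
by rewrite fwd_rhs_set1_bool res_rate_set0 res_rate_set1; case: ifP => _; nra.
Qed.

Lemma res_law_sym (t : R) : 0 <= t <= 1 -> h t [set true] = h t [set false].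
Proof.
have [init [cont der]] := lawH.
move=> t01; apply/eqP; rewrite -subr_eq0; apply/eqP; move: t t01.
apply: (ode_eq0_piecewise (c1 := 1 - ln 2) (c2 := 1 + ln 2)
  (dy := fun s => fwd_rhs (res_rate t0 s) (h s) [set true]
                  - fwd_rhs (res_rate t0 s) (h s) [set false]) t0_ge0).
- by move=> z; apply: continuousB; [exact: cont | exact: cont].
- have set1_neq0 b : ([set b] == finset.set0) = false.
    by apply/negbTE/set0Pn; exists b; rewrite inE.
  by rewrite !init !set1_neq0 subrr.
move=> s s01 s_t0; split.
  apply: (is_deriveB (f := h^~ [set true]) (g := h^~ [set false]));
  exact: der.
rewrite !fwd_rhs_set1_bool !res_rate_set0.
rewrite (res_rate_set1 _ _ true) (res_rate_set1 _ _ false).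
by case: ifP => _; ring.
Qed.

Lemma res_law_mass (t : R) : 0 <= t <= 1 ->
  h t finset.set0 + h t [set true] + h t [set false] + h t [set: bool] = 1.
Proof. by move=> t01; rewrite -sum_setbool (law_sum1 t0_ge0 lawH t01). Qed.

Lemma gbarH_ge0 (t : R) : 0 <= t <= 1 -> 0 <= gbarH h t.
Proof.
move=> t01; have := res_law_mass t01; have := res_law_set0_ge0 t01.
have := res_law_set1_ge0 true t01; have := res_law_set1_ge0 false t01.
by rewrite /gbarH /gH; lra.
Qed.

Lemma fH_derive (s : R) : 0 < s < 1 -> s != t0 ->
  is_derive s 1 (fH h)
    ((1 - ln 2) * (1 - fH h s) + (if t0 < s then ln 2 * gbarH h s else 0)).
Proof.
move=> s01 s_t0; have := law_fAux_derive lawH true s01 s_t0.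
move/is_derive_eq; apply.
have /res_law_mass mass := lt01_le01 s01.
have /res_law_sym sym := lt01_le01 s01.
have full : h s [set: bool] =
    1 - h s finset.set0 - h s [set true] - h s [set false].
  by rewrite -mass; ring.
rewrite /fH /gbarH /gH big_mkcond [in RHS]big_mkcond !sum_setbool !inE /=.
rewrite full sym.
rewrite res_rate_set0 (res_rate_set1 _ _ false).
by case: ifP => _; ring.
Qed.

End reference_law.

Lemma min_div_mul_le (R : realFieldType) (g D : R) :
  0 <= g -> Order.min (g / D) 1 * D <= g.
Proof.
move=> g_ge0; have [D_lt0 | D_gt0 | ->] := ltgtP D 0; last by rewrite mulr0.
  have gD_le1 : g / D <= 1.
    by rewrite (le_trans _ ler01) // mulr_ge0_le0 // invr_le0 ltW.
  by rewrite min_l // divfK ?lt_eqF.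
by rewrite -ler_pdivlMr // ge_min lexx.
Qed.

Lemma set2_other (T : finType) (a b u : T) : a != b -> u \in [set a; b] ->
  exists v, forall w, (w \in [set a; b]) && (w != u) = (w == v).
Proof.
move=> ab /set2P[] ->.
  exists b => w; rewrite !inE.
  by case: (eqVneq w a) => [->|_]; rewrite ?eqxx ?(negPf ab) ?andbT.
exists a => w; rewrite !inE.
by case: (eqVneq w b) => [->|_]; rewrite ?eqxx eq_sym ?(negPf ab) ?orbF ?andbT.
Qed.

Section aux_algorithm.
Variables (R : realType) (I J : finType) (lam : I -> R) (E : I -> J -> bool).
Variables (x : I -> J -> R) (lab : I -> J -> bool) (t0 : R).
Variables (h : R -> {set bool} -> R) (p : R -> {set J} -> R).
Hypotheses (SA : standing_assumption lam E x) (LO : labeling_ok lam E x lab).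

(* P(u free, v matched) + P(u, v free) / 2 = (2 fbar_u - g'_{u,v}) / 2, so the
   factor [aux_m] caps this flow at [gbar / 2]. *)
Lemma second_class_flow_le (i : I) (u v : J) (t : R) :
  (forall w, E i w && (w != u) = (w == v)) -> 0 <= gbarH h t ->
  \sum_(S : {set J} | u \notin S) p t S = fbarAux p u t ->
  \sum_(S : {set J} | u \notin S) p t S *
    \sum_(w | E i w && (w != u))
      (if w \in S then aux_m h p u w t else 1 / 2 * aux_m h p u w t)
  <= gbarH h t / 2.
Proof.
move=> other g_ge0 fbarE.
under eq_bigr => S _ do rewrite (big_pred1 v other).
set m := aux_m h p u v t.
have fbar_split : fbarAux p u t =
    \sum_(S : {set J} | (u \notin S) && (v \in S)) p t S + gpAux p u v t.
  by rewrite -fbarE (bigID (fun S : {set J} => v \in S)).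
rewrite (bigID (fun S : {set J} => v \in S)) /=.
under eq_bigr => S /andP[_ ->] do rewrite mulrC.
under [X in _ + X]eq_bigr => S /andP[_ /negPf ->] do rewrite mulrC.
rewrite -!mulr_sumr -/(gpAux p u v t).
have := min_div_mul_le (2 * fbarAux p u t - gpAux p u v t) g_ge0.
rewrite -/(aux_m h p u v t) -/m fbar_split.
by rewrite ler_pdivlMr //; lra.
Qed.

Lemma aux_type_flow_le (i : I) (u : J) (t : R) : 0 <= gbarH h t ->
  \sum_(S : {set J} | u \notin S) p t S = fbarAux p u t ->
  \sum_(S : {set J} | u \notin S)
      p t S * (lam i * aux_prob E lab t0 h p t S i u)
  <= (if E i u && lab i u then x i u * fbarAux p u t else 0)
     + (if E i u && ~~ lab i u
        then (if t0 < t then x i u * gbarH h t else 0) else 0).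
Proof.
have [_ [_ [_ [_ classes]]]] := SA; have [lab_first _] := LO.
move=> g_ge0 fbarE; rewrite /aux_prob -fbarE mulr_sumr.
case Eiu: (E i u) => /=; last by rewrite big1 ?addr0 // => S _; rewrite !mulr0.
have u_nbr : u \in nbrs E i by rewrite inE.
case: (classes i) => [fc | [j1 [j2 [j12 [nbrsE [x1 x2]]]]]].
  have [j [nbrsE xj]] := fc; move: u_nbr; rewrite nbrsE inE => /eqP uj; subst j.
  rewrite lab_first // addr0 cards1 eqxx xj.
  by apply: ler_sum => S _; rewrite mulr1 mulrC.
have xu : x i u = lam i / 2 by move: u_nbr; rewrite nbrsE !inE => /orP[]/eqP->.
rewrite nbrsE cards2 j12 xu /=; case: (lab i u) => /=.
  by rewrite addr0; apply: ler_sum => S _; rewrite mul1r mulrC.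
rewrite add0r; case: ifP => _; last by rewrite big1 // => S _; rewrite !mulr0.
have u_j12 : u \in [set j1; j2] by rewrite -nbrsE.
have [v other] := set2_other j12 u_j12.
have nbr_other w : E i w && (w != u) = (w == v) by rewrite -other -nbrsE inE.
have [lam_gt0 _] := SA.
under eq_bigr do rewrite mulrCA.
rewrite -mulr_sumr mulrAC -mulrA ler_pM2l //.
exact: second_class_flow_le nbr_other g_ge0 fbarE.
Qed.

Lemma sum_second_labeled (u : J) : \sum_(i | E i u && ~~ lab i u) x i u = ln 2.
Proof.
have [_ [_ [x_edge [x_sum _]]]] := SA; have [_ first_sum] := LO.
have := x_sum u.
rewrite (bigID (fun i => E i u)) /= (bigID (fun i => lab i u)) /=.
by rewrite first_sum [X in _ + X]big1 => [|i /x_edge //]; lra.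
Qed.

Lemma aux_flow_le (u : J) (t : R) : 0 <= gbarH h t ->
  \sum_(S : {set J} | u \notin S) p t S = fbarAux p u t ->
  \sum_(S : {set J} | u \notin S) p t S * aux_rate lam E lab t0 h p t S u
  <= (1 - ln 2) * fbarAux p u t + (if t0 < t then ln 2 * gbarH h t else 0).
Proof.
move=> g_ge0 fbarE; rewrite /aux_rate.
under eq_bigr do rewrite mulr_sumr.
rewrite exchange_big /=.
apply: le_trans (ler_sum _ (fun i _ => aux_type_flow_le i g_ge0 fbarE)) _.
have [_ first_sum] := LO.
rewrite big_split /= -big_mkcond -mulr_suml first_sum lerD2l -big_mkcond /=.
case: ifP => _; last by rewrite big1.
by rewrite -mulr_suml sum_second_labeled.
Qed.

End aux_algorithm.

Theorem lemma4p3 (R : realType) (I J : finType) (lam : I -> R)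
    (E : I -> J -> bool) (x : I -> J -> R) (lab : I -> J -> bool) (t0 : R)
    (h : R -> {set bool} -> R) (p : R -> {set J} -> R) :
  standing_assumption lam E x ->
  labeling_ok lam E x lab ->
  0 <= t0 <= 1 ->
  is_law (res_rate t0) h t0 ->
  is_law (aux_rate lam E lab t0 h p) p t0 ->
  forall (u : J) (t : R), 0 <= t <= 1 -> fAux p u t <= fH h t.
Proof.
move=> SA LO /andP[t0_ge0 _] lawH lawP u t t01; rewrite -subr_ge0; move: t t01.
pose flowH s :=
  (1 - ln 2) * (1 - fH h s) + (if t0 < s then ln 2 * gbarH h s else 0).
pose flowP s :=
  \sum_(S : {set J} | u \notin S) p s S * aux_rate lam E lab t0 h p s S u.
apply: (ode_ineq_ge0_piecewise (c1 := 1 - ln 2) (c2 := 1 - ln 2)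
  (dy := fun s => flowH s - flowP s) t0_ge0).
- move=> z; apply: continuousB; first exact: (law_fAux_continuous lawH).
  exact: (law_fAux_continuous lawP).
- have fH0 : fH h 0 = 0 := law_fAux0 lawH true.
  by rewrite (law_fAux0 lawP) fH0 subrr.
move=> s s01 s_t0; have s01' := lt01_le01 s01; split.
  apply: (is_deriveB (f := fH h) (g := fAux p u)); first exact: fH_derive.
  exact: (law_fAux_derive lawP u s01 s_t0).
have := aux_flow_le t0 SA LO (gbarH_ge0 t0_ge0 lawH s01')
  (law_sum_notin t0_ge0 lawP u s01').
by rewrite if_same /flowH /flowP /fbarAux; lra.
Qed.
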